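(* Let $(f,g)$ be a $t$-alternating pair of polynomials in $\mathbb N\{x_1,\dots,x_m\}$ ($m\ge t$). Then $(f,g)$ is a polynomial identity of every semiring$^\dagger$ $R$ which is spanned by fewer than $t$ elements over its center.
   Context: A semiring$^\dagger$ $(R,+,\cdot,1)$ is a set with binary operations such that $(R,+)$ is an abelian semigroup, $(R,\cdot,1)$ is a monoid, and multiplication distributes over addition (no zero required). Its center is the set of elements commuting multiplicatively with all of $R$. $R$ is spanned by $b_1,\dots,b_k$ over its center if every element of $R$ is a finite sum of elements $cb_i$ with $c$ central. $\mathbb N\{x_1,\dots,x_m\}$ is the monoid semiring over $\mathbb N$ of the free word monoid on noncommuting indeterminates. A pair $(f,g)$ is a polynomial identity of $R$ if $f(r_1,\dots,r_m)=g(r_1,\dots,r_m)$ for all $r_i\in R$. Polynomials $f,g$, each linear in each of $x_1,\dots,x_t$ (every monomial contains each of $x_1,\dots,x_t$ exactly once), form a $t$-alternating pair if, whenever $x_i$ and $x_j$ are interchanged for some $1\le i<j\le t$, $f$ becomes $g$ and $g$ becomes $f$. *)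

From Stdlib Require List.
From mathcomp Require Import all_boot.
From mathcomp Require Import fingroup perm.
Set Implicit Arguments. Unset Strict Implicit. Unset Printing Implicit Defensive.

Record semiring_dag := SemiringDag {
  sr_carrier :> Type;
  sr_add : sr_carrier -> sr_carrier -> sr_carrier;
  sr_mul : sr_carrier -> sr_carrier -> sr_carrier;
  sr_one : sr_carrier;
  sr_addA : forall x y z, sr_add x (sr_add y z) = sr_add (sr_add x y) z;
  sr_addC : forall x y, sr_add x y = sr_add y x;
  sr_mulA : forall x y z, sr_mul x (sr_mul y z) = sr_mul (sr_mul x y) z;
  sr_mul1l : forall x, sr_mul sr_one x = x;
  sr_mulr1 : forall x, sr_mul x sr_one = x;
  sr_mulDl : forall x y z, sr_mul (sr_add x y) z = sr_add (sr_mul x z) (sr_mul y z);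
  sr_mulDr : forall x y z, sr_mul x (sr_add y z) = sr_add (sr_mul x y) (sr_mul x z)
}.

Section SemiringDefs.
Variable R : semiring_dag.

(* Nonempty finite sums; the empty sum is undefined (None), since R need not
   have a zero. *)
Definition sum_ne (l : seq R) : option R :=
  match l with
  | [::] => None
  | x :: l' => Some (foldl (@sr_add R) x l')
  end.

Definition central (c : R) : Prop := forall r : R, sr_mul c r = sr_mul r c.

Definition spanned_over_center (k : nat) (b : 'I_k -> R) : Prop :=
  forall r : R, exists l : seq (R * 'I_k),
    (forall p, List.In p l -> central p.1) /\
    sum_ne [seq sr_mul p.1 (b p.2) | p <- l] = Some r.
End SemiringDefs.

(* N{x_1,...,x_m}: a polynomial is a finite N-linear combination of words in
   the noncommuting letters x_1..x_m (letters indexed by 'I_m, x_{i+1} <-> i),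
   represented as a list of monomials listed with multiplicity; two lists
   denote the same polynomial iff they are permutations of each other. *)
Definition word (m : nat) := seq 'I_m.
Definition npoly (m : nat) := seq (word m).

Definition eval_word (R : semiring_dag) (m : nat) (r : 'I_m -> R) (w : word m) : R :=
  foldr (fun i acc => sr_mul (r i) acc) (sr_one R) w.

(* Evaluation of a polynomial; the zero polynomial evaluates to None. *)
Definition eval_poly (R : semiring_dag) (m : nat) (r : 'I_m -> R) (f : npoly m)
  : option R := sum_ne [seq eval_word r w | w <- f].

Definition is_PI (R : semiring_dag) (m : nat) (f g : npoly m) : Prop :=
  forall r : 'I_m -> R, eval_poly r f = eval_poly r g.

Definition linear_in (m t : nat) (f : npoly m) : Prop :=
  forall w, w \in f -> forall i : 'I_m, i < t -> count_mem i w = 1.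

Definition swap_vars (m : nat) (i j : 'I_m) (f : npoly m) : npoly m :=
  [seq [seq tperm i j a | a <- w] | w <- f].

Definition t_alternating (m t : nat) (f g : npoly m) : Prop :=
  linear_in t f /\ linear_in t g /\
  forall i j : 'I_m, i < j -> j < t ->
    perm_eq (swap_vars i j f) g /\ perm_eq (swap_vars i j g) f.

(* Both polynomials are linear in x_1,...,x_t, so by multilinearity and
   centrality it suffices to check the identity when x_1,...,x_t are
   substituted by spanning elements b_j.  There are fewer than t of them, so
   two of the substituted variables x_i, x_j coincide; swapping them leaves the
   evaluation unchanged and turns g into f. *)
From HB Require Import structures.
From mathcomp Require Import all_boot.
From mathcomp Require Import fingroup perm.
Set Implicit Arguments. Unset Strict Implicit. Unset Printing Implicit Defensive.

Section OptionSums.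
Variable R : semiring_dag.
Local Notation add := (@sr_add R).
Local Notation mul := (@sr_mul R).

(* [None] is an adjoined zero, making [option R] an additive commutative
   monoid in which [sum_ne] becomes an ordinary big sum. *)
Definition oadd (a b : option R) : option R :=
  match a, b with
  | Some x, Some y => Some (add x y)
  | Some x, None => Some x
  | None, _ => b
  end.

Lemma oaddA : associative oadd.
Proof. by case=> [x|] [y|] [z|] //=; rewrite sr_addA. Qed.

Lemma oaddC : commutative oadd.
Proof. by case=> [x|] [y|] //=; rewrite sr_addC. Qed.

Lemma oadd0l : left_id None oadd.
Proof. by []. Qed.

HB.instance Definition _ := Monoid.isComLaw.Build (option R) None oadd
  oaddA oaddC oadd0l.

Lemma sum_neE (l : seq R) : sum_ne l = \big[oadd/None]_(x <- l) Some x.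
Proof.
case: l => [|x l]; first by rewrite big_nil.
rewrite /= big_cons; elim: l x => [|y l IHl] x; first by rewrite big_nil.
by rewrite [LHS]/= IHl big_cons oaddA.
Qed.

Lemma sum_ne_ind (Q : R -> Prop) (l : seq R) (x : R) :
  (forall y z, Q y -> Q z -> Q (add y z)) ->
  (forall y, List.In y l -> Q y) -> sum_ne l = Some x -> Q x.
Proof.
move=> Qadd; case: l => [|y l] //= Ql [<-].
have Qy : Q y by apply: Ql; left.
have {}Ql : forall u, List.In u l -> Q u by move=> u lu; apply: Ql; right.
elim: l y Qy Ql => [|z l IHl] //= y Qy Ql.
apply: IHl => [|u lu]; last by apply: Ql; right.
by apply: Qadd => //; apply: Ql; left.
Qed.

End OptionSums.

Section Evaluation.
Variables (R : semiring_dag) (m : nat).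
Local Notation add := (@sr_add R).
Local Notation mul := (@sr_mul R).
Implicit Types (r : 'I_m -> R) (s : 'I_m) (w : word m) (f g : npoly m).

Lemma eval_polyE r f :
  eval_poly r f = \big[@oadd R/None]_(w <- f) Some (eval_word r w).
Proof. by rewrite /eval_poly sum_neE big_map. Qed.

Lemma eq_eval_poly r1 r2 f : r1 =1 r2 -> eval_poly r1 f = eval_poly r2 f.
Proof.
move=> e; rewrite !eval_polyE; apply: eq_bigr => w _; congr Some.
by elim: w => //= a w ->; rewrite e.
Qed.

Lemma perm_eval_poly r f g : perm_eq f g -> eval_poly r f = eval_poly r g.
Proof. by move=> fg; rewrite !eval_polyE (perm_big _ fg). Qed.

Lemma eval_poly_swap r i j f :
  eval_poly r (swap_vars i j f) = eval_poly (r \o tperm i j) f.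
Proof.
rewrite !eval_polyE big_map; apply: eq_bigr => w _; congr Some.
by elim: w => //= a w ->.
Qed.

Lemma eval_word_free r s x y w : count_mem s w = 0 ->
  eval_word [eta r with s |-> x] w = eval_word [eta r with s |-> y] w.
Proof.
by elim: w => //= a w IHw; case: (eqVneq a s) => //= _ w0; rewrite IHw.
Qed.

Lemma eval_word_add r s x y w : count_mem s w = 1 ->
  eval_word [eta r with s |-> add x y] w =
  add (eval_word [eta r with s |-> x] w) (eval_word [eta r with s |-> y] w).
Proof.
elim: w => //= a w IHw; case: (eqVneq a s) => _ /= => [[w0]|w1].
  by rewrite sr_mulDl (eval_word_free _ x (add x y) w0)
    (eval_word_free _ y (add x y) w0).
by rewrite IHw // sr_mulDr.
Qed.

Lemma eval_word_scale r s c x w : central c -> count_mem s w = 1 ->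
  eval_word [eta r with s |-> mul c x] w = mul c (eval_word [eta r with s |-> x] w).
Proof.
move=> cc; elim: w => //= a w IHw; case: (eqVneq a s) => _ /= => [[w0]|w1].
  by rewrite -sr_mulA (eval_word_free _ x (mul c x) w0).
by rewrite IHw // !sr_mulA cc.
Qed.

Lemma eval_poly_add r s x y f : {in f, forall w, count_mem s w = 1} ->
  eval_poly [eta r with s |-> add x y] f =
  oadd (eval_poly [eta r with s |-> x] f) (eval_poly [eta r with s |-> y] f).
Proof.
move=> lin; rewrite !eval_polyE -big_split; apply: eq_big_seq => w /lin w1.
by rewrite eval_word_add.
Qed.

Lemma eval_poly_scale r s c x f : central c -> {in f, forall w, count_mem s w = 1} ->
  eval_poly [eta r with s |-> mul c x] f = omap (mul c) (eval_poly [eta r with s |-> x] f).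
Proof.
move=> cc lin; have oaddM : {morph omap (mul c) : u v / oadd u v}.
  by case=> [u|] [v|] //=; rewrite sr_mulDr.
rewrite !eval_polyE (big_morph _ oaddM (id2 := None) erefl).
by apply: eq_big_seq => w /lin w1; rewrite eval_word_scale.
Qed.

Lemma eval_poly_eq_spanned k (b : 'I_k -> R) r s f g :
  spanned_over_center b ->
  {in f, forall w, count_mem s w = 1} -> {in g, forall w, count_mem s w = 1} ->
  (forall j, eval_poly [eta r with s |-> b j] f = eval_poly [eta r with s |-> b j] g) ->
  eval_poly r f = eval_poly r g.
Proof.
move=> span linf ling eq_b.
pose Q x := eval_poly [eta r with s |-> x] f = eval_poly [eta r with s |-> x] g.
have rsE : [eta r with s |-> r s] =1 r by move=> i /=; case: eqP => [->|].
suff : Q (r s) by rewrite /Q !(eq_eval_poly _ rsE).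
have [l [lc sum_l]] := span (r s); apply: (sum_ne_ind _ _ sum_l) => [x y Qx Qy|y].
  by rewrite /Q !eval_poly_add // Qx Qy.
case/List.in_map_iff => -[c j] [<- /lc cc].
by rewrite /Q !eval_poly_scale // eq_b.
Qed.

End Evaluation.

Lemma exists_ltn_collision (T : finType) (t : nat) (J : 'I_t -> T) :
  #|T| < t -> exists i1 i2 : 'I_t, i1 < i2 /\ J i1 = J i2.
Proof.
move=> Tt; have /injectivePn [i1 [i2 ne12 eqJ]] : ~~ injectiveb J.
  by apply/injectiveP => /leq_card; rewrite card_ord leqNgt Tt.
case: (ltngtP i1 i2) => [lt12|lt21|eq12]; first by exists i1, i2.
  by exists i2, i1.
by move/val_inj: eq12 ne12 => ->; rewrite eqxx.
Qed.

Lemma eval_poly_eq_repeated (R : semiring_dag) m (r : 'I_m -> R) i j (f g : npoly m) :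
  perm_eq (swap_vars i j g) f -> r i = r j -> eval_poly r f = eval_poly r g.
Proof.
move=> gf rij; rewrite -(perm_eval_poly r gf) eval_poly_swap.
by apply: eq_eval_poly => a /=; case: tpermP => [->|->|] //; rewrite rij.
Qed.

Lemma spanned_over_center_gt0 (R : semiring_dag) k (b : 'I_k -> R) :
  spanned_over_center b -> 0 < k.
Proof.
move=> /(_ (sr_one R)) [[|[_ j] _] [_ //] _].
exact: leq_ltn_trans (leq0n j) (ltn_ord j).
Qed.

Section AlternatingIdentity.
Variables (m t : nat) (f g : npoly m).
Hypothesis htm : t <= m.
Hypothesis alt : t_alternating t f g.
Variables (R : semiring_dag) (k : nat) (b : 'I_k -> R).
Hypothesis hkt : k < t.
Hypothesis span : spanned_over_center b.

Lemma alternating_eval_basis (r : 'I_m -> R) (J : 'I_m -> 'I_k) :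
  (forall i : 'I_m, i < t -> r i = b (J i)) -> eval_poly r f = eval_poly r g.
Proof.
move=> rJ; have [i1 [i2 [lt12 eqJ]]] :
    exists i1 i2 : 'I_t, i1 < i2 /\ J (widen_ord htm i1) = J (widen_ord htm i2).
  by apply: exists_ltn_collision; rewrite card_ord.
have [_ gf] := alt.2.2 (widen_ord htm i1) (widen_ord htm i2) lt12 (ltn_ord i2).
by apply: eval_poly_eq_repeated gf _; rewrite !rJ //= eqJ.
Qed.

Lemma alternating_eval_partial_basis n : n <= t ->
  forall (r : 'I_m -> R) (J : 'I_m -> 'I_k),
  (forall i : 'I_m, n <= i < t -> r i = b (J i)) -> eval_poly r f = eval_poly r g.
Proof.
elim: n => [_ r J rJ|n IHn nt r J rJ]; first exact: (alternating_eval_basis (J := J)).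
have [linf [ling _]] := alt; pose s := Ordinal (leq_trans nt htm).
apply: (eval_poly_eq_spanned (s := s) span) => [w /linf-> //|w /ling-> //|j].
apply: (IHn (ltnW nt) _ [eta J with s |-> j]) => i /andP[ni it] /=.
case: eqP => // /eqP nes; apply: rJ; rewrite it andbT ltn_neqAle ni andbT.
by apply: contra nes => /eqP eqn; apply/eqP/val_inj.
Qed.

End AlternatingIdentity.

Theorem proposition5p7 (m t : nat) (htm : t <= m) (f g : npoly m) :
  t_alternating t f g ->
  forall (R : semiring_dag) (k : nat) (b : 'I_k -> R),
    k < t -> spanned_over_center b -> is_PI R f g.
Proof.
move=> alt R k b hkt span r.
pose j0 := Ordinal (spanned_over_center_gt0 span).
apply: (alternating_eval_partial_basis htm alt hkt span (leqnn t) (J := fun=> j0)).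
by move=> i /andP[ti it]; have := leq_ltn_trans ti it; rewrite ltnn.
Qed.
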